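(* Let $X$ be a finite set and let $C_i,C_j\in\mathcal C_X$ be distinct. Then $C_i$ and $C_j$ cover a common element $w$ of $S(X)$ if and only if $C_j$ can be obtained from $C_i$ by a nearest neighbor interchange over some internal edge $\alpha$ of $C_i$.
   Context: An $X$-tree is a pair $(T,\phi)$ with $T$ a finite tree and $\phi:X\to V(T)$ a map such that every vertex not in $\phi(X)$ has degree at least $3$; a vertex is labeled if it lies in $\phi(X)$. An $X$-forest is a set $\{(A,\mathcal T_A):A\in\pi\}$ where $\pi$ is a set partition of $X$ and each $\mathcal T_A$ is an $A$-tree. Contracting an edge $e=(u,v)$ removes $e$ and identifies $u,v$, the new vertex carrying the union of the labels of $u$ and $v$. Deleting $e$ removes $e$ without changing vertices; the deletion is safe if each of $u$ and $v$ is labeled or has degree greater than $3$. The Tuffley poset $S(X)$ is the set of $X$-forests ordered by $\mathcal F'\le\mathcal F$ iff $\mathcal F'$ is obtained from $\mathcal F$ by a sequence of contractions and safe deletions; $\mathcal F'\lessdot \mathcal F$ iff $\mathcal F'$ is obtained by a single contraction or safe deletion. $\mathcal C_X$ denotes the set of maximal elements of $S(X)$: trees whose leaves are labeled bijectively by $X$ and whose internal vertices are unlabeled of degree $3$. An internal edge is an edge both of whose endpoints are internal vertices. Nearest neighbor interchange (NNI): for $C\in\mathcal C_X$ and an internal edge $\alpha=(u,v)$, the edge $\alpha$ separates subtrees $A,B$ attached at $u$ from subtrees $C',D$ attached at $v$. Swapping $B$ with $C'$, or swapping $B$ with $D$, yields a new tree in $\mathcal C_X$; obtaining either of these from $C$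 is an NNI over $\alpha$. *)

From mathcomp Require Import all_boot.
Unset Implicit Arguments.
Unset Strict Implicit.
Unset Printing Implicit Defensive.

(* All objects (X-forests, X-trees)
   are considered up to label-preserving graph isomorphism ([iso]). *)
Record xgraph (X : finType) := XGraph {
  nv : nat;
  adj : rel 'I_nv;
  lab : X -> 'I_nv
}.
Arguments nv {X} x.
Arguments adj {X} x _ _.
Arguments lab {X} x _.

Section Defs.
Variable X : finType.
Implicit Types G H : xgraph X.

Definition simple G :=
  (forall x, ~~ adj G x x) /\ (forall x y, adj G x y = adj G y x).

Definition acyclic G :=
  forall s : seq 'I_(nv G), uniq s -> 2 < size s -> ~~ cycle (adj G) s.

Definition labeled G (v : 'I_(nv G)) := exists a, lab G a = v.

Definition deg G (v : 'I_(nv G)) := #|[set w | adj G v w]|.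

Definition iso G H :=
  exists f : 'I_(nv G) -> 'I_(nv H),
    bijective f /\ (forall x y, adj H (f x) (f y) = adj G x y) /\
    (forall a, f (lab G a) = lab H a).

(* An X-forest: a forest each of whose components contains a labelled vertex
   (each component is an A-tree for a block A of a partition of X), and
   whose unlabelled vertices have degree >= 3. *)
Definition is_Xforest G :=
  simple G /\ acyclic G /\
  (forall v, exists a, connect (adj G) v (lab G a)) /\
  (forall v, ~ labeled G v -> 3 <= deg G v).

Definition is_tree G :=
  simple G /\ acyclic G /\ (forall v w, connect (adj G) v w).

(* C_X: trees whose leaves are labelled bijectively by X and whose internal
   vertices are unlabelled of degree 3.  (A vertex of degree <= 1 is a leaf;
   degree 0 only occurs for the one-vertex tree when |X| = 1.) *)
Definition in_CX G :=
  is_tree G /\ injective (lab G) /\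
  (forall v, labeled G v <-> deg G v <= 1) /\
  (forall v, ~ labeled G v -> deg G v = 3).

Definition upair {n} (x y a b : 'I_n) : bool :=
  ((x == a) && (y == b)) || ((x == b) && (y == a)).

(* H is (isomorphic to) the result of contracting the edge {u,v} of G:
   g : V(G) -> V(H) is onto and identifies exactly u and v; edges of H are
   the images of edges of G other than {u,v}; labels are carried along. *)
Definition contraction G H :=
  exists (u v : 'I_(nv G)), adj G u v /\
  exists g : 'I_(nv G) -> 'I_(nv H),
    (forall y, exists x, g x = y) /\
    (forall x y, g x = g y <-> (x = y \/ upair x y u v)) /\
    (forall a b, adj H a b <->
        (a <> b /\ exists a0 b0, [/\ g a0 = a, g b0 = b & adj G a0 b0])) /\
    (forall x, lab H x = g (lab G x)).

Definition safe_deletion G H :=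
  exists (u v : 'I_(nv G)), adj G u v /\
  (labeled G u \/ 3 < deg G u) /\ (labeled G v \/ 3 < deg G v) /\
  exists g : 'I_(nv G) -> 'I_(nv H),
    bijective g /\
    (forall x y, adj H (g x) (g y) = adj G x y && ~~ upair x y u v) /\
    (forall x, lab H x = g (lab G x)).

Definition covby G' G := contraction G G' \/ safe_deletion G G'.

(* Tree obtained from G by the NNI over edge {u,v}, where b is a neighbour
   of u (b <> v) and c a neighbour of v (c <> u): the subtrees at b and c
   are swapped, i.e. edges {u,b},{v,c} are replaced by {u,c},{v,b}. *)
Definition nni_graph G (u v b c : 'I_(nv G)) : xgraph X :=
  @XGraph X (nv G)
    (fun x y => (adj G x y && ~~ upair x y u b && ~~ upair x y v c)
                || upair x y u c || upair x y v b)
    (lab G).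

Definition NNI G H :=
  exists (u v b c : 'I_(nv G)),
    [/\ adj G u v, ~ labeled G u, ~ labeled G v, adj G u b & b != v] /\
    adj G v c /\ c != u /\ iso (nni_graph G u v b c) H.

End Defs.

Arguments simple {X} G.
Arguments acyclic {X} G.
Arguments labeled {X} G v.
Arguments deg {X} G v.
Arguments iso {X} G H.
Arguments is_Xforest {X} G.
Arguments is_tree {X} G.
Arguments in_CX {X} G.
Arguments contraction {X} G H.
Arguments safe_deletion {X} G H.
Arguments covby {X} G' G.
Arguments nni_graph {X} G u v b c.
Arguments NNI {X} G H.

(* A safe deletion in a tree of C_X is only possible when the tree is a single
   edge between two leaves, so apart from that degenerate case a common lower
   cover w of C_i and C_j is obtained from both by contracting an edge.  The
   vertex created by the contraction is the only vertex of w that violates the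
   degree and labelling conditions of C_X, so both contractions merge at the
   same vertex of w, and a tree contracting onto w is determined by how the
   four neighbours of that vertex are split into two pairs.  If an end of the
   contracted edge is labeled there is only one way; otherwise the split coming
   from C_i gives back C_i and the two mixed splits are the two NNIs over the
   contracted edge.  Conversely an NNI over an edge does not change the
   contraction of that edge, which is an X-forest. *)

From mathcomp Require Import all_boot zify.
Set Implicit Arguments. Unset Strict Implicit. Unset Printing Implicit Defensive.

Lemma labeledP (X : finType) (G : xgraph X) v :
  reflect (labeled G v) [exists a, lab G a == v].
Proof. by apply: (iffP existsP) => -[a /eqP-ea]; exists a; rewrite ?ea. Qed.

Lemma upairC n (x y a b : 'I_n) : upair x y a b = upair y x a b.
Proof. by rewrite /upair orbC; congr orb; apply: andbC. Qed.

Lemma upair_sym n (x y a b : 'I_n) : upair x y a b = upair x y b a.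
Proof. by rewrite /upair orbC. Qed.

Lemma upairF n (x y a b : 'I_n) : x != a -> x != b -> upair x y a b = false.
Proof. by rewrite /upair => /negbTE-> /negbTE->. Qed.

Lemma upair_inj n m (f : 'I_n -> 'I_m) (x y a b : 'I_n) : injective f ->
  upair (f x) (f y) (f a) (f b) = upair x y a b.
Proof. by move=> f_inj; rewrite /upair !(inj_eq f_inj). Qed.

Lemma deg_ge (X : finType) (G : xgraph X) x (s : seq 'I_(nv G)) :
  uniq s -> {in s, forall y, adj G x y} -> size s <= deg G x.
Proof.
move=> s_uniq s_adj; rewrite /deg -(card_uniqP s_uniq); apply: subset_leq_card.
by apply/subsetP => y ys; rewrite inE s_adj.
Qed.

Section SimpleGraph.
Variables (X : finType) (G : xgraph X).
Hypothesis simG : simple G.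

Lemma adj_irr x : adj G x x = false.
Proof. by case: simG => irr _; apply/negbTE. Qed.

Lemma adj_sym x y : adj G x y = adj G y x.
Proof. by case: simG. Qed.

Lemma adj_neq x y : adj G x y -> x != y.
Proof. by apply: contraTneq => ->; rewrite adj_irr. Qed.

Hypothesis acyG : acyclic G.

Lemma no_triangle x y z : adj G x y -> adj G y z -> adj G x z -> False.
Proof.
move=> xy yz xz; have := @acyG [:: x; y; z].
rewrite /= !inE !negb_or (adj_neq xy) (adj_neq yz) (adj_neq xz) /= xy yz adj_sym xz.
by move/(_ isT isT).
Qed.

Lemma no_closing_path a b x (Q : seq 'I_(nv G)) :
  adj G a b \/ a = b -> path (adj G) x Q -> uniq (x :: Q) ->
  a \notin x :: Q -> b \notin x :: Q -> 0 < size Q ->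
  adj G a x -> adj G (last x Q) b -> False.
Proof.
move=> [ab|<-] xQ xQ_uniq aQ bQ Q_gt0 ax lastb; last first.
  have := @acyG (a :: x :: Q); rewrite cons_uniq aQ xQ_uniq /= !ltnS Q_gt0.
  by rewrite rcons_path xQ lastb ax => /(_ isT isT).
have := @acyG (rcons (a :: x :: Q) b).
rewrite rcons_uniq cons_uniq xQ_uniq aQ in_cons negb_or eq_sym (adj_neq ab) bQ.
rewrite size_rcons /= !ltnS ltnW // ax !rcons_path xQ lastb last_rcons adj_sym ab.
by move/(_ isT isT).
Qed.

(* Follow fresh neighbours: a finite forest with all degrees >= 2 would
   produce a path longer than the number of vertices. *)
Lemma acyclic_low_degree (x0 : 'I_(nv G)) : exists x, deg G x < 2.
Proof.
suff: ~~ [forall x, 1 < deg G x].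
  by rewrite negb_forall => /existsP[x]; rewrite -leqNgt; exists x.
apply/negP => /forallP deg2.
have extend e p : path (adj G) e p -> uniq (e :: p) ->
    exists y, path (adj G) y (e :: p) && uniq (y :: e :: p).
  move=> ep ep_uniq; have : 0 < #|[set t | adj G e t] :\ head e p|.
    by move: (deg2 e); rewrite /deg (cardsD1 (head e p)); case: (_ \in _) => /=; lia.
  case/card_gt0P => y; rewrite !inE => /andP[y_head ey].
  exists y; rewrite cons_uniq ep_uniq andbT [path _ _ _]/= adj_sym ey ep /=.
  apply/negP => y_in.
  rewrite in_cons eq_sym (negbTE (adj_neq ey)) /= in y_in.
  case/splitPr: y_in ep ep_uniq y_head => p1 p2 ep ep_uniq y_head.
  have e_p1_uniq : uniq (e :: rcons p1 y).
    by move: ep_uniq; rewrite -cats1 -cat_cons -[y :: p2]cat1s catA cat_uniq => /andP[].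
  have := acyG e_p1_uniq; rewrite /= rcons_path last_rcons adj_sym ey andbT size_rcons.
  move: ep; rewrite cat_path rcons_path /= => /andP[-> /andP[-> _]].
  case: p1 {ep_uniq e_p1_uniq} y_head => [|z q] /=; first by rewrite eqxx.
  by move=> _ /(_ isT).
suff long k e p : path (adj G) e p -> uniq (e :: p) -> nv G - size (e :: p) <= k -> False.
  by apply: (long (nv G) x0 [::]); rewrite ?leq_subr.
elim: k e p => [|k IH] e p ep ep_uniq ep_size;
  have [y /andP[yep yep_uniq]] := extend e p ep ep_uniq.
- have := max_card (mem (y :: e :: p)); rewrite card_ord (card_uniqP yep_uniq) /=.
  by move: ep_size => /=; lia.
- by apply: (IH y (e :: p)) => //; move: ep_size => /=; lia.
Qed.

End SimpleGraph.

Definition nbrs_but (X : finType) (G : xgraph X) (x y a c : 'I_(nv G)) :=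
  [/\ a != c, a != y, c != y & forall z, z != y -> adj G x z = (z == a) || (z == c)].
Arguments nbrs_but {X} G x y a c.

Lemma nbrs_butC (X : finType) (G : xgraph X) x y a c :
  nbrs_but G x y a c -> nbrs_but G x y c a.
Proof. by case=> ac ay cy nbrs; split=> // [|z zy]; [rewrite eq_sym | rewrite orbC nbrs]. Qed.

Lemma nbrs_but_adj (X : finType) (G : xgraph X) x y a c :
  nbrs_but G x y a c -> adj G x a /\ adj G x c.
Proof. by case=> _ ay cy nbrs; rewrite !nbrs // !eqxx orbT. Qed.

Section CXTree.
Variables (X : finType) (G : xgraph X).
Hypothesis GX : in_CX G.

Lemma cx_simple : simple G. Proof. by case: GX => -[]. Qed.
Lemma cx_acyclic : acyclic G. Proof. by case: GX => -[_ []]. Qed.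

Lemma cx_leaf_adj x y z : labeled G x -> adj G x y -> adj G x z -> y = z.
Proof.
case: GX => _ [_ [leaf _]] /leaf; rewrite /deg => deg1 xy xz.
apply/eqP; apply: contraLR deg1 => yz; rewrite -ltnNge.
apply: (@leq_trans #|[set y; z]|); first by rewrite cards2 yz.
by apply/subset_leq_card/subsetP => t; rewrite !inE => /orP[]/eqP->.
Qed.

Lemma cx_leaf_adjE x y : labeled G x -> adj G x y -> forall z, adj G x z = (z == y).
Proof.
move=> xl xy z; apply/idP/eqP => [xz|->//].
exact: cx_leaf_adj xl xz xy.
Qed.

Lemma cx_edge_no_common_nbr u v : adj G u v -> forall x, adj G u x -> adj G v x -> False.
Proof. by move=> uv x ux vx; apply: (no_triangle cx_simple cx_acyclic uv vx ux). Qed.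

Lemma cx_edge_nbrs_neq u v a c : adj G u v -> adj G u a -> adj G v c -> a != c.
Proof.
move=> uv ua vc; apply: contraTneq ua => ->; apply/negP => uc.
exact: cx_edge_no_common_nbr uv _ uc vc.
Qed.

Lemma cx_internal_adj x y : ~ labeled G x -> adj G x y -> exists a c, nbrs_but G x y a c.
Proof.
case: GX => _ [_ [_ internal]] /internal; rewrite /deg => deg3 xy.
have : #|[set t | adj G x t] :\ y| == 2.
  by move: deg3; rewrite (cardsD1 y) inE xy add1n => -[->].
case/cards2P => a [c [ac nbrs]].
have : a \in [set t | adj G x t] :\ y by rewrite nbrs !inE eqxx.
have : c \in [set t | adj G x t] :\ y by rewrite nbrs !inE eqxx orbT.
rewrite !inE => /andP[cy _] /andP[ay _].
exists a, c; split=> // z zy.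
have := congr1 (fun A : {set 'I_(nv G)} => z \in A) nbrs.
by rewrite !inE zy.
Qed.

(* A leaf of the tree exists, and leaves are labeled. *)
Lemma cx_labeled_vertex (x0 : 'I_(nv G)) : exists v, labeled G v.
Proof.
have [x deg_x] := acyclic_low_degree cx_simple cx_acyclic x0.
by case: GX => _ [_ [leaf _]]; exists x; apply/leaf.
Qed.

End CXTree.

Definition contraction_by (X : finType) (G w : xgraph X) (u v : 'I_(nv G))
    (g : 'I_(nv G) -> 'I_(nv w)) :=
  [/\ adj G u v, (forall y, exists x, g x = y),
      (forall x y, g x = g y <-> (x = y \/ upair x y u v)),
      (forall a b, adj w a b <->
         (a <> b /\ exists a0 b0, [/\ g a0 = a, g b0 = b & adj G a0 b0])) &
      (forall x, lab w x = g (lab G x))].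
Arguments contraction_by {X} G w u v g.

Lemma contractionP (X : finType) (G w : xgraph X) :
  contraction G w <-> exists u v g, contraction_by G w u v g.
Proof.
split; first by case=> u [v [uv [g [? [? [? ?]]]]]]; exists u, v, g.
by case=> u [v [g [uv ? ? ? ?]]]; exists u, v; split => //; exists g.
Qed.

Section Contraction.
Variables (X : finType) (G w : xgraph X) (u v : 'I_(nv G)) (g : 'I_(nv G) -> 'I_(nv w)).
Hypotheses (simG : simple G) (Cg : contraction_by G w u v g).

Lemma contraction_swap : contraction_by G w v u g.
Proof.
case: Cg => uv g_onto g_fib g_adj g_lab; split => //; first by rewrite (adj_sym simG).
by move=> x y; rewrite upair_sym; apply: g_fib.
Qed.

Lemma contraction_neq : u != v.
Proof. by case: Cg => /adj_neq->. Qed.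

Lemma contraction_eq_merged x : (g x == g u) = (x == u) || (x == v).
Proof.
have uNv := contraction_neq; case: Cg => _ _ g_fib _ _.
apply/eqP/idP => [/g_fib[->|]|/orP[]/eqP->]; first by rewrite eqxx.
- by rewrite /upair (negbTE uNv) andbF eqxx andbT /= => ->; rewrite orbT.
- by [].
- by apply/g_fib; right; rewrite /upair !eqxx orbT.
Qed.

Lemma contraction_v : g v = g u.
Proof. by apply/eqP; rewrite contraction_eq_merged eqxx orbT. Qed.

Lemma contraction_neq_merged x : x != u -> x != v -> g x != g u.
Proof. by move=> xu xv; rewrite contraction_eq_merged negb_or xu xv. Qed.

Lemma contraction_fiber x y : x != u -> x != v -> g y = g x -> y = x.
Proof. by case: Cg => _ _ g_fib _ _ xu xv /g_fib[//|]; rewrite upairC upairF. Qed.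

Lemma contraction_inj x y : x != u -> x != v -> y != u -> y != v ->
  (g x == g y) = (x == y).
Proof. by move=> xu xv yu yv; apply/eqP/eqP => [/(contraction_fiber yu yv)|->]. Qed.

Lemma contraction_adj x y : x != u -> x != v -> y != u -> y != v ->
  adj w (g x) (g y) = adj G x y.
Proof.
move=> xu xv yu yv; case: Cg => _ _ g_fib g_adj _; apply/idP/idP.
  move/g_adj => [_ [a0 [b0 [ea eb ab]]]].
  by rewrite -(contraction_fiber xu xv ea) -(contraction_fiber yu yv eb).
move=> xy; apply/g_adj; split; last by exists x, y.
by move/g_fib => [xy'|]; [move: xy; rewrite xy' adj_irr | rewrite upairF].
Qed.

Lemma contraction_adj_merged x : x != u -> x != v ->
  adj w (g u) (g x) = adj G u x || adj G v x.
Proof.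
move=> xu xv; case: Cg => _ _ _ g_adj _; apply/idP/idP.
  move/g_adj => [_ [a0 [b0 [ea eb ab]]]].
  move: (contraction_fiber xu xv eb) ab => ->.
  by have := contraction_eq_merged a0; rewrite ea eqxx => /esym/orP[]/eqP-> ->; rewrite ?orbT.
move=> uvx; apply/g_adj; split.
  by apply/eqP; rewrite eq_sym contraction_neq_merged.
by case/orP: uvx => [ux|vx]; [exists u, x | exists v, x; rewrite contraction_v].
Qed.

Lemma contraction_simple : simple w.
Proof.
case: Cg => _ _ _ g_adj _; split=> [x|x y]; first by apply/negP => /g_adj[].
apply/idP/idP => /g_adj [xy [a0 [b0 [ea eb ab]]]]; apply/g_adj;
  by split; [move=> yx; apply: xy | exists b0, a0; rewrite (adj_sym simG)].
Qed.

Lemma contraction_lab_merged a :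
  (lab w a == g u) = (lab G a == u) || (lab G a == v).
Proof. by case: Cg => _ _ _ _ ->; rewrite contraction_eq_merged. Qed.

Lemma contraction_lab a z : z != u -> z != v -> (lab w a == g z) = (lab G a == z).
Proof.
case: Cg => _ _ _ _ g_lab zu zv; rewrite g_lab.
by apply/eqP/eqP => [/(contraction_fiber zu zv)|->].
Qed.

Definition preim y := odflt u [pick x | g x == y].

Lemma preimK y : g (preim y) = y.
Proof.
case: Cg => _ g_onto _ _ _; rewrite /preim; case: pickP => [x /eqP //|none].
by have [x gx] := g_onto y; move: (none x); rewrite gx eqxx.
Qed.

Lemma contraction_preimK x : x != u -> x != v -> preim (g x) = x.
Proof. by move=> xu xv; apply: (contraction_fiber xu xv); rewrite preimK. Qed.

Lemma preim_unmerged y : y != g u -> (preim y != u) && (preim y != v).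
Proof. by rewrite -{1}(preimK y) contraction_eq_merged negb_or. Qed.

Lemma contraction_deg z : z != u -> z != v -> deg w (g z) <= deg G z.
Proof.
case: Cg => _ _ _ g_adj _ zu zv; rewrite /deg.
apply: leq_trans (leq_imset_card g _); apply/subset_leq_card/subsetP => y.
rewrite inE => /g_adj [_ [a0 [b0 [ea eb ab]]]].
by apply/imsetP; exists b0; rewrite // inE -(contraction_fiber zu zv ea).
Qed.

Lemma contraction_connect x z : connect (adj G) x z -> connect (adj w) (g x) (g z).
Proof.
case: Cg => _ _ _ g_adj _ /connectP [p xp ->] {z}.
elim: p x xp => [|y p IH] x /=; first by rewrite connect0.
case/andP => xy yp; apply: connect_trans (IH y yp).
have [->|gxy] := eqVneq (g x) (g y); first exact: connect0.
by apply/connect1/g_adj; split; [exact/eqP | exists x, y].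
Qed.

Lemma contraction_nbrs_but a c : nbrs_but G u v a c ->
  forall x, x != u -> x != v -> adj G u x = (g x \in [set g a; g c]).
Proof.
move=> Nu x xu xv; have [[_ av cv nbrs] [ua uc]] := (Nu, nbrs_but_adj Nu).
have [au cu] : a != u /\ c != u by rewrite !(eq_sym _ u) !(adj_neq simG).
by rewrite nbrs // !inE !contraction_inj.
Qed.

Hypothesis acyG : acyclic G.

Let preim_adj y1 y2 : y1 != g u -> y2 != g u -> adj w y1 y2 -> adj G (preim y1) (preim y2).
Proof.
move=> /preim_unmerged/andP[u1 v1] /preim_unmerged/andP[u2 v2].
by rewrite -(contraction_adj u1 v1 u2 v2) !preimK.
Qed.

Let preim_inj : {in [pred y | y != g u] &, injective preim}.
Proof. by move=> y1 y2 _ _ e; rewrite -(preimK y1) e preimK. Qed.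

(* A cycle through the merged vertex lifts to a path of [G] between
   neighbours of [u] or [v] that avoids both, closing a cycle in [G]. *)
Lemma contraction_cycle_unmerged s : uniq s -> 2 < size s -> cycle (adj w) s ->
  g u \notin s.
Proof.
move=> s_uniq s_size s_cycle; apply/negP => ms.
have := rot_index ms; set t := (drop _ _ ++ _) => Et.
have : cycle (adj w) (g u :: t) by rewrite -Et rot_cycle.
have : uniq (g u :: t) by rewrite -Et rot_uniq.
have : 2 < size (g u :: t) by rewrite -Et size_rot.
case: t {Et} => [|y1 t] //= t_size /andP[mt t_uniq].
rewrite rcons_path => /andP[my1 /andP[t_path lastm]].
have t_unmerged : all [pred y | y != g u] (y1 :: t).
  by apply/allP => y ys; apply: contraNneq mt => <-.
have y1m : y1 != g u by have := allP t_unmerged y1; rewrite inE eqxx => /(_ isT).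
have lastNm : last y1 t != g u.
  by have := allP t_unmerged (last y1 t); rewrite mem_last => /(_ isT).
have Q_path : path (adj G) (preim y1) (map preim t).
  by rewrite path_map; apply: (sub_in_path _ t_unmerged t_path) => ? ? ? ?; apply: preim_adj.
have Q_uniq : uniq (preim y1 :: map preim t).
  rewrite -map_cons map_inj_in_uniq // => ? ? /(allP t_unmerged) ? /(allP t_unmerged).
  exact: preim_inj.
have uvNQ z : z \in [:: u; v] -> z \notin preim y1 :: map preim t.
  move=> uv_z; apply/negP; rewrite -map_cons => /mapP [y yt ez].
  have := preim_unmerged (allP t_unmerged y yt); rewrite -ez.
  by move: uv_z; rewrite !inE => /orP[]/eqP->; rewrite eqxx ?andbF.
have Q_size : 0 < size (map preim t) by rewrite size_map; move: t_size; rewrite !ltnS.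
have [uv _ _ _ _] := Cg.
have closing a b : a \in [:: u; v] -> b \in [:: u; v] ->
    adj G a (preim y1) -> adj G b (last (preim y1) (map preim t)) -> False.
  move=> a_uv b_uv ay1 blast; rewrite (adj_sym simG) in blast.
  apply: (no_closing_path simG acyG _ Q_path Q_uniq (uvNQ a a_uv) (uvNQ b b_uv) Q_size ay1 blast).
  move: a_uv b_uv; rewrite !inE => /orP[]/eqP-> /orP[]/eqP->;
    by [right | left | left; rewrite (adj_sym simG) | right].
have /andP[y1u y1v] := preim_unmerged y1m.
have /andP[lu lv] := preim_unmerged lastNm.
have := contraction_adj_merged y1u y1v; rewrite preimK my1 => /esym/orP.
have := contraction_adj_merged lu lv; rewrite preimK (adj_sym contraction_simple) lastm.
rewrite -last_map => /esym/orP.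
by case=> lastz [] zy1; apply: (closing _ _ _ _ zy1 lastz); rewrite !inE eqxx ?orbT.
Qed.

Lemma contraction_acyclic : acyclic w.
Proof.
move=> s s_uniq s_size; apply/negP => s_cycle.
have s_unmerged : all [pred y | y != g u] s.
  apply/allP => y ys; apply: contraTneq ys => ->.
  exact: contraction_cycle_unmerged s_uniq s_size s_cycle.
have := @acyG (map preim s); rewrite map_inj_in_uniq ?size_map //; last first.
  by move=> z1 z2 /(allP s_unmerged) ? /(allP s_unmerged); apply: preim_inj.
move=> /(_ s_uniq s_size); apply/negP/negPn; rewrite cycle_map.
by apply: (sub_in_cycle _ s_unmerged s_cycle) => y1 y2 n1 n2; apply: preim_adj.
Qed.

End Contraction.

(* The vertices of [w] that cannot be the unchanged image of a vertex of a
   tree in [C_X]. *)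
Definition irregular (X : finType) (w : xgraph X) y :=
  [\/ ~ labeled w y /\ 4 <= deg w y, labeled w y /\ 2 <= deg w y |
      exists a b, [/\ a != b, lab w a = y & lab w b = y]].
Arguments irregular {X} w y.

Section CXContraction.
Variables (X : finType) (G w : xgraph X) (u v : 'I_(nv G)) (g : 'I_(nv G) -> 'I_(nv w)).
Hypotheses (GX : in_CX G) (Cg : contraction_by G w u v g).
Let simG := cx_simple GX.

Let merged_leaf_irregular a b : contraction_by G w a b g ->
  labeled G a -> ~ labeled G b -> irregular w (g a).
Proof.
move=> Cab [x xa] bNl; have [ab _ _ _ g_lab] := Cab.
apply: Or32; split; first by exists x; rewrite g_lab xa.
have [c1 [c2 Nb]] := cx_internal_adj GX bNl (etrans (adj_sym simG b a) ab).
have [[c12 c1a c2a _] [bc1 bc2]] := (Nb, nbrs_but_adj Nb).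
have c1b : c1 != b by rewrite eq_sym (adj_neq simG bc1).
have c2b : c2 != b by rewrite eq_sym (adj_neq simG bc2).
apply: (@deg_ge _ _ _ [:: g c1; g c2]).
  by rewrite /= inE andbT (contraction_inj Cab).
move=> z; rewrite !inE => /orP[]/eqP->;
  by rewrite (contraction_adj_merged simG Cab) // ?bc1 ?bc2 orbT.
Qed.

Lemma contraction_merged_irregular : irregular w (g u).
Proof.
have [uv _ _ _ g_lab] := Cg; have uNv := contraction_neq simG Cg.
have [[x xu]|uNl] := labeledP u; have [[y yv]|vNl] := labeledP v.
- apply: Or33; exists x, y; rewrite !g_lab xu yv (contraction_v simG Cg); split=> //.
  by apply: contraNneq uNv => xy; rewrite -xu -yv xy.
- by apply: (merged_leaf_irregular Cg); first exists x.
- rewrite -(contraction_v simG Cg); apply: (merged_leaf_irregular (contraction_swap simG Cg)) => //.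
  by exists y.
apply: Or31; split.
  by case=> a /eqP; rewrite (contraction_lab_merged simG Cg) => /orP[]/eqP ea;
    [apply: uNl | apply: vNl]; exists a.
have [a1 [a2 Nu]] := cx_internal_adj GX uNl uv.
have [c1 [c2 Nv]] := cx_internal_adj GX vNl (etrans (adj_sym simG v u) uv).
have [[a12 a1v a2v _] [ua1 ua2]] := (Nu, nbrs_but_adj Nu).
have [[c12 c1u c2u _] [vc1 vc2]] := (Nv, nbrs_but_adj Nv).
have a1u : a1 != u by rewrite eq_sym (adj_neq simG ua1).
have a2u : a2 != u by rewrite eq_sym (adj_neq simG ua2).
have c1v : c1 != v by rewrite eq_sym (adj_neq simG vc1).
have c2v : c2 != v by rewrite eq_sym (adj_neq simG vc2).
apply: (@deg_ge _ _ _ [:: g a1; g a2; g c1; g c2]).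
  by rewrite /= !inE !negb_or !(contraction_inj Cg) // a12 c12 !(cx_edge_nbrs_neq GX uv).
move=> z; rewrite !inE => /or4P[]/eqP->;
  by rewrite (contraction_adj_merged simG Cg) // ?ua1 ?ua2 ?vc1 ?vc2 ?orbT.
Qed.

Lemma contraction_regular z : z != u -> z != v -> ~ irregular w (g z).
Proof.
move=> zu zv; have [_ _ _ _ g_lab] := Cg.
have deg_gz := contraction_deg Cg zu zv.
have labeled_gz : labeled w (g z) <-> labeled G z.
  split=> -[a ea]; exists a; last by rewrite g_lab ea.
  by apply/eqP; rewrite -(contraction_lab Cg a zu zv) ea.
have [_ [lab_inj [leaf internal]]] := GX.
case=> [[zNl deg4]|[zl deg2]|[a [b [ab ea eb]]]].
- by have := leq_trans deg4 deg_gz; rewrite internal // => zl; apply/zNl/labeled_gz.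
- by have := leq_trans deg2 (leq_trans deg_gz (proj1 (leaf z) (proj1 labeled_gz zl))).
- have lab_z c : lab w c = g z -> lab G c = z.
    by move=> e; apply/eqP; rewrite -(contraction_lab Cg c zu zv) e.
  by move: ab; rewrite (lab_inj a b) ?eqxx // (lab_z a ea) (lab_z b eb).
Qed.

Lemma contraction_internal_deg y : ~ labeled w y -> 3 <= deg w y.
Proof.
move=> yNl; have [uv _ g_fib g_adj g_lab] := Cg.
have [y_merged|y_unmerged] := eqVneq y (g u).
  rewrite y_merged in yNl *.
  case: contraction_merged_irregular => [[_ /ltnW //]|[yl _]|[a [b [_ ea _]]]];
    case: yNl => //; by exists a.
have /andP[xu xv] := preim_unmerged simG Cg y_unmerged.
have yx := preimK Cg y; set x := preim u g y in xu xv yx.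
have xNl : ~ labeled G x by case=> a ea; apply: yNl; exists a; rewrite g_lab ea.
have [_ [_ [_ internal]]] := GX.
have : 0 < #|[set t | adj G x t]| by rewrite -/(deg G x) internal.
case/card_gt0P => n1; rewrite inE => xn1.
have [n2 [n3 Nx]] := cx_internal_adj GX xNl xn1.
have [[n23 n21 n31 _] [xn2 xn3]] := (Nx, nbrs_but_adj Nx).
have adj_image n : adj G x n -> adj w (g x) (g n).
  move=> xn; apply/g_adj; split; last by exists x, n.
  by move/esym/(contraction_fiber Cg xu xv) => nx; move: xn; rewrite nx (adj_irr simG).
have image_neq a b : adj G x a -> adj G x b -> a != b -> g a != g b.
  move=> xa xb; apply: contra => /eqP/g_fib[->//|]; rewrite /upair.
  rewrite (adj_sym simG x) (adj_sym simG x b) in xa xb.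
  case/orP=> /andP[/eqP ea /eqP eb]; subst a b.
  - by case: (cx_edge_no_common_nbr GX uv xa xb).
  - by case: (cx_edge_no_common_nbr GX uv xb xa).
rewrite -yx; apply: (@deg_ge _ _ _ [:: g n1; g n2; g n3]).
  by rewrite /= !inE !negb_or !image_neq // eq_sym.
by move=> z; rewrite !inE => /or3P[]/eqP->; apply: adj_image.
Qed.

Lemma contraction_forest : is_Xforest w.
Proof.
split; first exact: contraction_simple simG Cg.
split; first exact: contraction_acyclic simG Cg (cx_acyclic GX).
split; last exact: contraction_internal_deg.
move=> y; have [_ [a _]] := cx_labeled_vertex GX u.
have [[_ [_ G_connected]] _] := GX; have [_ _ _ _ g_lab] := Cg.
by exists a; rewrite -(preimK Cg y) g_lab; apply/(contraction_connect Cg)/G_connected.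
Qed.

End CXContraction.

Section NNIGraph.
Variables (X : finType) (G : xgraph X) (u v b c : 'I_(nv G)).
Hypotheses (simG : simple G) (uv : adj G u v).
Let N := nni_graph G u v b c.

Lemma nni_adjE x y : adj N x y =
  (adj G x y && ~~ upair x y u b && ~~ upair x y v c) || upair x y u c || upair x y v b.
Proof. by []. Qed.

Lemma nni_simple : u != c -> v != b -> simple N.
Proof.
move=> uc vb; split=> [x|x y] /=.
  rewrite (adj_irr simG) /= /upair; apply/negP => /orP[]/orP[]/andP[/eqP ex /eqP ey];
    by move: uc vb; rewrite -ex -ey eqxx.
by rewrite (adj_sym simG x y) (upairC x y u b) (upairC x y v c) (upairC x y u c) (upairC x y v b).
Qed.

Lemma nni_adj_u x : x != u -> x != v -> adj N u x = (adj G u x && (x != b)) || (x == c).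
Proof.
move=> xu xv; rewrite /= /upair !eqxx (negbTE (adj_neq simG uv)) (negbTE xu) (negbTE xv).
by rewrite !andbF !orbF andbT.
Qed.

Lemma nni_adj_v x : x != u -> x != v -> adj N v x = (adj G v x && (x != c)) || (x == b).
Proof.
move=> xu xv; rewrite /= /upair !eqxx eq_sym (negbTE (adj_neq simG uv)) (negbTE xu) (negbTE xv).
by rewrite !andbF !orbF andbT.
Qed.

(* Contracting [{u, v}] forgets which of [u], [v] each neighbour was attached to. *)
Lemma nni_contraction (w : xgraph X) (g : 'I_(nv G) -> 'I_(nv w)) :
  contraction_by G w u v g -> adj G u b -> b != v -> adj G v c -> c != u ->
  contraction_by N w u v g.
Proof.
move=> Cg ub bv vc cu; have [_ g_onto g_fib g_adj g_lab] := Cg.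
have uNv := contraction_neq simG Cg; have gvu := contraction_v simG Cg.
have uvN : adj N u v.
  rewrite /= uv /upair !eqxx /= [v == b]eq_sym (negbTE bv) [v == u]eq_sym (negbTE uNv).
  by rewrite [u == c]eq_sym (negbTE cu) !andbF.
split=> // a0 b0; rewrite g_adj; split=> -[a0b0 [x [y [gx gy xy]]]]; split=> //.
  have [xyN|xyNN] := boolP (adj N x y); first by exists x, y.
  have : upair x y u b || upair x y v c.
    by apply: contraNT xyNN; rewrite negb_or nni_adjE xy => /andP[-> ->].
  rewrite /upair => /orP[]/orP[]/andP[/eqP ex /eqP ey]; subst x y.
  - by exists v, b; rewrite gvu /= /upair !eqxx !orbT.
  - by exists b, v; rewrite gvu /= /upair !eqxx !orbT.
  - by exists u, c; rewrite -gvu /= /upair !eqxx !orbT.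
  - by exists c, u; rewrite -gvu /= /upair !eqxx !orbT.
move: xy; rewrite nni_adjE => /orP[/orP[/andP[/andP[xy _] _]|]|]; first by exists x, y.
  rewrite /upair => /orP[]/andP[/eqP ex /eqP ey]; subst x y.
  - by exists v, c; rewrite gvu.
  - by exists c, v; rewrite gvu // (adj_sym simG).
rewrite /upair => /orP[]/andP[/eqP ex /eqP ey]; subst x y.
- by exists u, b; rewrite -gvu.
- by exists b, u; rewrite -gvu // (adj_sym simG).
Qed.

End NNIGraph.

Definition merge_map (X : finType) (G H w : xgraph X) (u v : 'I_(nv G)) (u' v' : 'I_(nv H))
    (g : 'I_(nv G) -> 'I_(nv w)) (h : 'I_(nv H) -> 'I_(nv w)) x :=
  if x == u then u' else if x == v then v' else preim u' h (g x).

Section Reconstruction.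
Variables (X : finType) (G H w : xgraph X) (u v : 'I_(nv G)) (u' v' : 'I_(nv H)).
Variables (g : 'I_(nv G) -> 'I_(nv w)) (h : 'I_(nv H) -> 'I_(nv w)).
Hypotheses (simG : simple G) (simH : simple H).
Hypotheses (CG : contraction_by G w u v g) (CH : contraction_by H w u' v' h).
Hypothesis merged_hg : h u' = g u.
Local Notation f := (merge_map u v u' v' g h).

Lemma merge_map_unmerged x : x != u -> x != v -> [/\ f x != u', f x != v' & h (f x) = g x].
Proof.
move=> xu xv; rewrite /merge_map (negbTE xu) (negbTE xv) (preimK CH).
have := preim_unmerged simH CH (y := g x); rewrite merged_hg.
by rewrite (contraction_neq_merged simG CG xu xv) => /(_ isT)/andP[-> ->].
Qed.

Lemma merge_mapK : cancel f (merge_map u' v' u v h g).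
Proof.
have uNv := contraction_neq simG CG; have uNv' := contraction_neq simH CH.
move=> x; have [->|xu] := eqVneq x u; first by rewrite /merge_map !eqxx.
have [->|xv] := eqVneq x v.
  by rewrite /merge_map [v == u]eq_sym (negbTE uNv) eqxx [v' == u']eq_sym (negbTE uNv') eqxx.
have [yu' yv' hy] := merge_map_unmerged xu xv.
by rewrite {1}/merge_map (negbTE yu') (negbTE yv') hy (contraction_preimK CG xu xv).
Qed.

Lemma merge_map_adj :
  (forall x, x != u -> x != v -> adj H u' (f x) = adj G u x) ->
  (forall x, x != u -> x != v -> adj H v' (f x) = adj G v x) ->
  forall x y, adj H (f x) (f y) = adj G x y.
Proof.
move=> side_u side_v; have [uv _ _ _ _] := CG; have [uv' _ _ _ _] := CH.
have uNv := contraction_neq simG CG.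
have f_u : f u = u' by rewrite /merge_map eqxx.
have f_v : f v = v' by rewrite /merge_map eq_sym (negbTE uNv) eqxx.
have adj_u x : adj H u' (f x) = adj G u x.
  have [->|xu] := eqVneq x u; first by rewrite f_u !adj_irr.
  have [->|xv] := eqVneq x v; first by rewrite f_v uv uv'.
  exact: side_u.
have adj_v x : adj H v' (f x) = adj G v x.
  have [->|xu] := eqVneq x u; first by rewrite f_u (adj_sym simH) (adj_sym simG) uv uv'.
  have [->|xv] := eqVneq x v; first by rewrite f_v !adj_irr.
  exact: side_v.
move=> x y.
have [->|xu] := eqVneq x u; first by rewrite f_u adj_u.
have [->|xv] := eqVneq x v; first by rewrite f_v adj_v.
have [->|yu] := eqVneq y u; first by rewrite f_u (adj_sym simH) (adj_sym simG) adj_u.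
have [->|yv] := eqVneq y v; first by rewrite f_v (adj_sym simH) (adj_sym simG) adj_v.
have [xu' xv' hx] := merge_map_unmerged xu xv.
have [yu' yv' hy] := merge_map_unmerged yu yv.
by rewrite -(contraction_adj simH CH xu' xv' yu' yv') hx hy (contraction_adj simG CG).
Qed.

End Reconstruction.

Section ContractionIso.
Variables (X : finType) (G H w : xgraph X) (u v : 'I_(nv G)) (u' v' : 'I_(nv H)).
Variables (g : 'I_(nv G) -> 'I_(nv w)) (h : 'I_(nv H) -> 'I_(nv w)).
Hypotheses (simG : simple G) (simH : simple H).
Hypotheses (CG : contraction_by G w u v g) (CH : contraction_by H w u' v' h).
Hypothesis merged_hg : h u' = g u.
Hypotheses (ncG : forall x, adj G u x -> adj G v x -> False)
           (ncH : forall y, adj H u' y -> adj H v' y -> False).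
Local Notation f := (merge_map u v u' v' g h).

(* [v] and [v'] have the same neighbours too, since neighbourhoods of
   adjacent vertices are disjoint. *)
Lemma contraction_iso (Z : {set 'I_(nv w)}) :
  (forall x, x != u -> x != v -> adj G u x = (g x \in Z)) ->
  (forall y, y != u' -> y != v' -> adj H u' y = (h y \in Z)) ->
  (forall a, (lab G a == u) = (lab H a == u')) ->
  (forall a, (lab G a == v) = (lab H a == v')) -> iso G H.
Proof.
move=> sideG sideH lab_u lab_v.
have f_unmerged := merge_map_unmerged simG simH CG CH merged_hg.
have side_u x : x != u -> x != v -> adj H u' (f x) = adj G u x.
  by move=> xu xv; have [yu' yv' hy] := f_unmerged x xu xv; rewrite sideH // sideG // hy.
have side_v x : x != u -> x != v -> adj H v' (f x) = adj G v x.
  move=> xu xv; have := contraction_adj_merged simG CG xu xv.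
  have [yu' yv' hy] := f_unmerged x xu xv.
  rewrite -hy -merged_hg (contraction_adj_merged simH CH yu' yv') side_u //.
  have [ux|uNx] := boolP (adj G u x); last by [].
  have [vx|//] := boolP (adj G v x); first by case: (ncG ux vx).
  rewrite -(side_u x xu xv) in ux.
  by have [fvx|//] := boolP (adj H v' (f x)); case: (ncH ux fvx).
exists (merge_map u v u' v' g h); split.
  exists (merge_map u' v' u v h g); first exact: merge_mapK.
  exact: (merge_mapK simH simG CH CG (esym merged_hg)).
split; first exact: merge_map_adj simG simH CG CH merged_hg side_u side_v.
move=> a; have [_ _ _ _ g_lab] := CG; have [_ _ _ _ h_lab] := CH.
have [au|aNu] := eqVneq (lab G a) u.
  by rewrite au /merge_map eqxx; apply/esym/eqP; rewrite -lab_u au.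
have [av|aNv] := eqVneq (lab G a) v.
  rewrite av /merge_map eq_sym (negbTE (contraction_neq simG CG)) eqxx.
  by apply/esym/eqP; rewrite -lab_v av.
have [_ _ hf] := f_unmerged _ aNu aNv.
apply: (contraction_fiber CH); rewrite -?lab_u -?lab_v ?aNu ?aNv //.
by rewrite hf -g_lab h_lab.
Qed.

End ContractionIso.

Lemma pair_of_four (T : finType) (a1 a2 c1 c2 b1 b2 : T) : b1 != b2 ->
  b1 \in [set a1; a2; c1; c2] -> b2 \in [set a1; a2; c1; c2] ->
  [\/ [set b1; b2] = [set a1; a2], [set b1; b2] = [set c1; c2] |
      exists a c, [/\ a \in [:: a1; a2], c \in [:: c1; c2] & [set b1; b2] = [set a; c]]].
Proof.
rewrite !inE => b12 /orP[/orP[/orP[]|]|]/eqP-eb1 /orP[/orP[/orP[]|]|]/eqP-eb2;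
  subst b1 b2; rewrite ?eqxx // in b12;
  solve [ by constructor 1; rewrite // setUC
        | by constructor 2; rewrite // setUC
        | by constructor 3; do 2 eexists; split; last (by []); rewrite !inE eqxx ?orbT
        | by constructor 3; do 2 eexists; split; last (by apply: setUC); rewrite !inE eqxx ?orbT ].
Qed.

Section TwoTrees.
Variables (X : finType) (G H w : xgraph X).
Hypotheses (GX : in_CX G) (HX : in_CX H).
Let simG := cx_simple GX.
Let simH := cx_simple HX.

(* The merged vertex is the only irregular vertex of [w]. *)
Lemma cx_contractions_merged u v u' v' g h :
  contraction_by G w u v g -> contraction_by H w u' v' h -> h u' = g u.
Proof.
move=> CG CH; apply/eqP/negPn/negP => hg.
rewrite eq_sym in hg; have /andP[yu yv] := preim_unmerged simH CH hg.
apply: (contraction_regular HX CH yu yv); rewrite (preimK CH).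
exact: (contraction_merged_irregular GX CG).
Qed.

Lemma cx_contractions_labels u v u' v' g h a :
  contraction_by G w u v g -> contraction_by H w u' v' h ->
  (lab G a == u) || (lab G a == v) = (lab H a == u') || (lab H a == v').
Proof.
move=> CG CH; rewrite -(contraction_lab_merged simG CG) -(contraction_lab_merged simH CH).
by rewrite (cx_contractions_merged CG CH).
Qed.

Lemma leaf_contraction_iso u v u' v' g h a :
  contraction_by G w u v g -> contraction_by H w u' v' h ->
  lab G a = u -> lab H a = u' -> iso G H.
Proof.
move=> CG CH au au'; have [uv _ _ _ _] := CG; have [uv' _ _ _ _] := CH.
have ul : labeled G u by exists a.
have u'l : labeled H u' by exists a.
have [[_ [G_inj _]] [_ [H_inj _]]] := (GX, HX).
have lab_u b : (lab G b == u) = (lab H b == u').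
  by rewrite -au -au' (inj_eq G_inj) (inj_eq H_inj).
apply: (contraction_iso simG simH CG CH (cx_contractions_merged CG CH)
         (cx_edge_no_common_nbr GX uv) (cx_edge_no_common_nbr HX uv') (Z := set0)) => //.
- by move=> x _ xv; rewrite (cx_leaf_adjE GX ul uv) (negbTE xv) inE.
- by move=> y _ yv'; rewrite (cx_leaf_adjE HX u'l uv') (negbTE yv') inE.
move=> b; have := cx_contractions_labels b CG CH; rewrite lab_u.
case: (lab H b =P u') => [bu' _|_ //].
have /eqP bu : lab G b == u by rewrite lab_u bu'.
by rewrite bu bu' (negbTE (contraction_neq simG CG)) (negbTE (contraction_neq simH CH)).
Qed.

Lemma labeled_contraction_iso u v u' v' g h :
  contraction_by G w u v g -> contraction_by H w u' v' h -> labeled G u -> iso G H.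
Proof.
move=> CG CH [a au]; have := cx_contractions_labels a CG CH.
rewrite au eqxx => /esym/orP[]/eqP au'; first exact: leaf_contraction_iso CG CH au au'.
by apply: (leaf_contraction_iso CG (contraction_swap simH CH)) au au'.
Qed.

Lemma unlabeled_contraction_labels u v u' v' g h :
  contraction_by G w u v g -> contraction_by H w u' v' h ->
  ~ labeled G u -> ~ labeled G v ->
  forall a, [/\ (lab G a == u) = false, (lab G a == v) = false,
                (lab H a == u') = false & (lab H a == v') = false].
Proof.
move=> CG CH uNl vNl a.
have [au|aNu] := eqVneq (lab G a) u; first by case: uNl; exists a.
have [av|aNv] := eqVneq (lab G a) v; first by case: vNl; exists a.
have := cx_contractions_labels a CG CH; rewrite (negbTE aNu) (negbTE aNv) /=.
by move/esym/norP => [/negbTE-> /negbTE->].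
Qed.

(* If [u'] sees in [w] one former neighbour of [u] and one of [v], then [H]
   is [G] with the other neighbours [q] of [u] and [r] of [v] exchanged. *)
Lemma mixed_contraction_nni u v u' v' g h p q r s :
  contraction_by G w u v g -> contraction_by H w u' v' h ->
  ~ labeled G u -> ~ labeled G v -> nbrs_but G u v p q -> nbrs_but G v u r s ->
  (forall y, y != u' -> y != v' -> adj H u' y = (h y \in [set g p; g r])) -> NNI G H.
Proof.
move=> CG CH uNl vNl Nu Nv sideH; have [uv _ _ _ _] := CG; have [uv' _ _ _ _] := CH.
have [[pq pv qv Au] [up uq]] := (Nu, nbrs_but_adj Nu).
have [[rs ru su Av] [vr vs]] := (Nv, nbrs_but_adj Nv).
have [pu qu] : p != u /\ q != u by rewrite !(eq_sym _ u) !(adj_neq simG).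
have [rv sv] : r != v /\ s != v by rewrite !(eq_sym _ v) !(adj_neq simG).
set N := nni_graph G u v q r.
have simN : simple N by apply: nni_simple; rewrite // eq_sym.
have CN := nni_contraction simG uv CG uq qv vr ru.
have N_u x : x != u -> x != v -> adj N u x = (x == p) || (x == r).
  move=> xu xv; rewrite nni_adj_u // Au //.
  have [->|xq] := eqVneq x q; first by rewrite andbF /= [q == p]eq_sym (negbTE pq).
  by rewrite andbT orbF.
have N_v x : x != u -> x != v -> adj N v x = (x == s) || (x == q).
  move=> xu xv; rewrite nni_adj_v // Av //.
  have [->|xr] := eqVneq x r; first by rewrite andbF /= (negbTE rs).
  by rewrite andbT.
have sideN x : x != u -> x != v -> adj N u x = (g x \in [set g p; g r]).
  by move=> xu xv; rewrite N_u // !inE !(contraction_inj CG).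
have ncN x : adj N u x -> adj N v x -> False.
  have [->|xu] := eqVneq x u; first by rewrite (adj_irr simN).
  have [->|xv] := eqVneq x v; first by rewrite (adj_irr simN).
  rewrite N_u // N_v // => /orP[]/eqP-> /orP[]/eqP ps.
  - by move: (cx_edge_nbrs_neq GX uv up vs); rewrite ps eqxx.
  - by move: pq; rewrite ps eqxx.
  - by move: rs; rewrite ps eqxx.
  - by move: (cx_edge_nbrs_neq GX uv uq vr); rewrite ps eqxx.
have labels := unlabeled_contraction_labels CG CH uNl vNl.
exists u, v, q, r; do !split=> //.
apply: (contraction_iso simN simH CN CH (cx_contractions_merged CG CH) ncN
         (cx_edge_no_common_nbr HX uv') sideN sideH) => a /=;
  by case: (labels a) => Gu Gv Hu Hv; rewrite ?Gu ?Gv ?Hu ?Hv.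
Qed.

Lemma contraction_nbr_image u v u' v' g h y :
  contraction_by G w u v g -> contraction_by H w u' v' h -> adj H u' y -> y != v' ->
  exists2 x, (adj G u x && (x != v)) || (adj G v x && (x != u)) & h y = g x.
Proof.
move=> CG CH u'y yv'; have yu' : y != u' by rewrite eq_sym (adj_neq simH u'y).
have merged_hg := cx_contractions_merged CG CH.
have hy : h y != g u by rewrite -merged_hg (contraction_neq_merged simH CH yu' yv').
have /andP[xu xv] := preim_unmerged simG CG hy.
exists (preim u g (h y)); last by rewrite (preimK CG).
have := contraction_adj_merged simG CG xu xv.
by rewrite (preimK CG) -merged_hg (contraction_adj_merged simH CH yu' yv') u'y xu xv !andbT.
Qed.

(* The two neighbours of [u'] other than [v'] are seen in [w] as two of the
   four neighbours [a1, a2, c1, c2] of the edge [{u, v}]; the choices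
   [{a1, a2}] and [{c1, c2}] give back [G], the four mixed ones the NNIs. *)
Lemma unlabeled_contraction_nni u v u' v' g h :
  contraction_by G w u v g -> contraction_by H w u' v' h ->
  ~ labeled G u -> ~ labeled G v -> ~ iso G H -> NNI G H.
Proof.
move=> CG CH uNl vNl GNH; have [uv _ _ _ _] := CG; have [uv' _ _ _ _] := CH.
have vu : adj G v u by rewrite (adj_sym simG).
have labels := unlabeled_contraction_labels CG CH uNl vNl.
have u'Nl : ~ labeled H u' by case=> a /eqP; case: (labels a) => _ _ ->.
have [a1 [a2 Nu]] := cx_internal_adj GX uNl uv.
have [c1 [c2 Nv]] := cx_internal_adj GX vNl vu.
have [b1 [b2 Nu']] := cx_internal_adj HX u'Nl uv'.
have [[b12 b1v' b2v' _] [u'b1 u'b2]] := (Nu', nbrs_but_adj Nu').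
have sideH := contraction_nbrs_but simH CH Nu'.
have in_sides y : adj H u' y -> y != v' -> h y \in [set g a1; g a2; g c1; g c2].
  move=> u'y yv'; have [x ux_vx ->] := contraction_nbr_image CG CH u'y yv'.
  have [[_ _ _ Au] [_ _ _ Av]] := (Nu, Nv).
  case/orP: ux_vx => /andP[+ xN]; rewrite ?Au ?Av // => /orP[]/eqP->;
    by rewrite !inE eqxx ?orbT.
have hb12 : h b1 != h b2.
  by rewrite (contraction_inj CH) // eq_sym (adj_neq simH).
case: (pair_of_four hb12 (in_sides _ u'b1 b1v') (in_sides _ u'b2 b2v'))
  => [Z|Z|[a [c [aA cC Z]]]].
- case: GNH; apply: (contraction_iso simG simH CG CH (cx_contractions_merged CG CH)
    (cx_edge_no_common_nbr GX uv) (cx_edge_no_common_nbr HX uv')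
    (contraction_nbrs_but simG CG Nu)).
  + by move=> y yu' yv'; rewrite sideH // Z.
  + by move=> a; case: (labels a) => -> _ -> _.
  + by move=> a; case: (labels a) => _ -> _ ->.
- have CG' := contraction_swap simG CG.
  case: GNH; apply: (contraction_iso simG simH CG' CH (cx_contractions_merged CG' CH)
    (cx_edge_no_common_nbr GX vu) (cx_edge_no_common_nbr HX uv')
    (contraction_nbrs_but simG CG' Nv)).
  + by move=> y yu' yv'; rewrite sideH // Z.
  + by move=> a; case: (labels a) => _ -> -> _.
  + by move=> a; case: (labels a) => -> _ _ ->.
have mixed p q r s : nbrs_but G u v p q -> nbrs_but G v u r s ->
    [set h b1; h b2] = [set g p; g r] -> NNI G H.
  move=> Np Nr sides; apply: (mixed_contraction_nni CG CH uNl vNl Np Nr) => y yu' yv'.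
  by rewrite sideH // sides.
move: aA cC Z; rewrite !inE => /orP[]/eqP-> /orP[]/eqP->.
- exact: (mixed _ _ _ _ Nu Nv).
- exact: (mixed _ _ _ _ Nu (nbrs_butC Nv)).
- exact: (mixed _ _ _ _ (nbrs_butC Nu) Nv).
- exact: (mixed _ _ _ _ (nbrs_butC Nu) (nbrs_butC Nv)).
Qed.

Lemma cx_common_contraction_nni u v u' v' g h :
  contraction_by G w u v g -> contraction_by H w u' v' h -> ~ iso G H -> NNI G H.
Proof.
move=> CG CH GNH.
case: (labeledP u) => [ul|uNl]; first by case: GNH; exact: labeled_contraction_iso CG CH ul.
case: (labeledP v) => [vl|vNl].
  by case: GNH; exact: labeled_contraction_iso (contraction_swap simG CG) CH vl.
exact: unlabeled_contraction_nni CG CH uNl vNl GNH.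
Qed.

End TwoTrees.

Lemma tree_closed_pair (X : finType) (G : xgraph X) (u v : 'I_(nv G)) :
  is_tree G -> (forall x y, adj G x y -> (x == u) || (x == v) -> (y == u) || (y == v)) ->
  forall x, (x == u) || (x == v).
Proof.
move=> [simG [_ G_connected]] closed_uv x.
have uv_closed : closed (adj G) [pred z | (z == u) || (z == v)].
  by move=> a b ab; apply/idP/idP; apply: closed_uv; rewrite // (adj_sym simG).
have := closed_connect uv_closed (G_connected u x).
by rewrite !inE eqxx => <-.
Qed.

(* In a tree of [C_X] only an edge between two leaves can be deleted safely,
   so the tree is that single edge and the deletion leaves no edge at all. *)
Lemma cx_safe_deletion (X : finType) (G w : xgraph X) : in_CX G -> safe_deletion G w ->
  exists (u v : 'I_(nv G)) (g : 'I_(nv G) -> 'I_(nv w)), [/\ u != v, bijective g,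
    forall x, lab w x = g (lab G x), forall a b, adj w a b = false &
    forall x y, adj G x y = (x != y)].
Proof.
move=> GX [u [v [uv [u_safe [v_safe [g [g_bij [g_adj g_lab]]]]]]]].
have simG := cx_simple GX; have [_ [_ [_ internal]]] := GX.
have safe_leaf z : labeled G z \/ 3 < deg G z -> labeled G z.
  by case=> // deg4; case: (labeledP z) => // /internal deg3; rewrite deg3 in deg4.
have uv_only x y : adj G x y -> (x == u) || (x == v) -> (y == u) || (y == v).
  move=> xy /orP[]/eqP ex; subst x.
    by rewrite (cx_leaf_adj GX (safe_leaf u u_safe) xy uv) eqxx orbT.
  by rewrite (cx_leaf_adj GX (safe_leaf v v_safe) xy (etrans (adj_sym simG v u) uv)) eqxx.
have uv_all := tree_closed_pair GX.1 uv_only.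
have G_adj x y : adj G x y = (x != y).
  apply/idP/idP => [xy|]; first exact: (adj_neq simG xy).
  move: (uv_all x) (uv_all y) => /orP[]/eqP-> /orP[]/eqP->; rewrite ?eqxx // => _.
  by rewrite (adj_sym simG).
exists u, v, g; split=> // [|a b]; first by rewrite -G_adj.
have [g' gK g'K] := g_bij; rewrite -(g'K a) -(g'K b) g_adj G_adj /upair.
by move: (uv_all (g' a)) (uv_all (g' b)) => /orP[]/eqP-> /orP[]/eqP->;
  rewrite ?eqxx ?orbT /= ?andbF.
Qed.

Lemma cx_safe_deletion_not_contraction (X : finType) (G H w : xgraph X) :
  in_CX G -> in_CX H -> safe_deletion G w -> ~ contraction H w.
Proof.
move=> GX HX /(cx_safe_deletion GX) [u [v [g [uNv [g' gK _] _ w_adj _]]]].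
case/contractionP => u' [v' [h CH]]; have simH := cx_simple HX.
have [uv' h_onto h_fib h_adj _] := CH.
have H_edges x y : adj H x y -> upair x y u' v'.
  move=> xy; apply: contraT => xyN; have : adj w (h x) (h y).
    apply/h_adj; split; last by exists x, y.
    by move/h_fib => [exy|]; [move: xy; rewrite exy (adj_irr simH) | apply/negP].
  by rewrite w_adj.
have H_closed x y : adj H x y -> (x == u') || (x == v') -> (y == u') || (y == v').
  by move=> /H_edges; rewrite /upair => /orP[]/andP[_ /eqP->]; rewrite eqxx ?orbT.
have h_const y : h y = h u'.
  by case/orP: (tree_closed_pair HX.1 H_closed y) => /eqP->; rewrite ?(contraction_v simH CH).
have [y1 hy1] := h_onto (g u); have [y2 hy2] := h_onto (g v).
by move: uNv; rewrite -(gK u) -(gK v) -hy1 -hy2 !h_const eqxx.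
Qed.

Lemma cx_safe_deletions_iso (X : finType) (G H w : xgraph X) :
  in_CX G -> in_CX H -> safe_deletion G w -> safe_deletion H w -> iso G H.
Proof.
move=> GX HX /(cx_safe_deletion GX) [_ [_ [g [_ [g' gK g'K] g_lab _ G_adj]]]].
move=> /(cx_safe_deletion HX) [_ [_ [h [_ [h' hK h'K] h_lab _ H_adj]]]].
exists (h' \o g); split; first by exists (g' \o h) => x /=; rewrite ?hK ?gK ?h'K ?g'K.
split=> [x y|a] /=; first by rewrite G_adj H_adj (inj_eq (can_inj h'K)) (inj_eq (can_inj gK)).
by rewrite -g_lab h_lab hK.
Qed.

Section ContractEdge.
Variables (X : finType) (G : xgraph X) (u v : 'I_(nv G)) (u0 : 'I_(nv G).-1).

(* Vertex [v] is removed and sent to [u]; the remaining vertices are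
   renumbered by [unlift v].  The default [u0] is never used, since [unlift v]
   only fails at [v]. *)
Definition contract_map (x : 'I_(nv G)) : 'I_(nv G).-1 :=
  odflt u0 (unlift v (if x == v then u else x)).

Definition contract_graph : xgraph X :=
  @XGraph X (nv G).-1
    (fun a b => (a != b) &&
       [exists a0, exists b0, (contract_map a0 == a) && (contract_map b0 == b) && adj G a0 b0])
    (fun x => contract_map (lab G x)).

Lemma contract_graph_contraction : simple G -> adj G u v ->
  contraction_by G contract_graph u v contract_map.
Proof.
move=> simG uv; have uNv := adj_neq simG uv.
pose r x := if x == v then u else x.
have r_v x : v != r x by rewrite /r; case: (eqVneq x v) => [_|xv]; rewrite eq_sym.
have lift_map x : lift v (contract_map x) = r x.
  by have [k e1 e2] := unlift_some (r_v x); rewrite /contract_map -/(r x) e2 /= e1.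
have map_eq x y : contract_map x = contract_map y <-> r x = r y.
  by split=> [e|e]; [rewrite -!lift_map e | apply: (@lift_inj _ v); rewrite !lift_map].
split=> //.
- by move=> y; exists (lift v y); rewrite /contract_map lift_eqF liftK.
- move=> x y; apply: (iff_trans (map_eq x y)); rewrite /r /upair.
  case: (eqVneq x v) => [->|xv]; case: (eqVneq y v) => [->|yv] /=.
  + by split=> // _; left.
  + split=> [<-|[e|]]; first by right; rewrite eqxx orbT.
      by rewrite e eqxx in yv.
    by rewrite andbF => /eqP.
  + split=> [->|[e|]]; first by right; rewrite eqxx.
      by rewrite e eqxx in xv.
    by rewrite andbT orbF => /eqP.
  + by split=> [->|[->|]] //; [left | rewrite andbF].
- move=> a b; split.
    by case/andP => /eqP ab /existsP [a0 /existsP [b0 /andP[/andP[/eqP ea /eqP eb] e]]];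
      split=> //; exists a0, b0.
  move=> [ab [a0 [b0 [ea eb e]]]]; apply/andP; split; first exact/eqP.
  by apply/existsP; exists a0; apply/existsP; exists b0; rewrite ea eb !eqxx.
Qed.

End ContractEdge.
Arguments contract_map {X} G u v u0 x.
Arguments contract_graph {X} G u v u0.

Lemma contraction_by_iso (X : finType) (G H w : xgraph X) u v g :
  contraction_by G w u v g -> iso G H -> exists u' v' h, contraction_by H w u' v' h.
Proof.
move=> [uv g_onto g_fib g_adj g_lab] [f [[f' fK f'K] [f_adj f_lab]]].
have f_inj := can_inj fK.
exists (f u), (f v), (g \o f'); split=> /=.
- by rewrite f_adj.
- by move=> y; have [x <-] := g_onto y; exists (f x); rewrite /= fK.
- move=> x y; rewrite g_fib -(upair_inj _ _ _ _ f_inj) !f'K.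
  by split=> -[e|?]; [left; rewrite -[x]f'K e f'K | right | left; rewrite e | right].
- move=> a b; rewrite g_adj; split=> -[ab [a0 [b0 [ea eb e]]]]; split=> //.
    by exists (f a0), (f b0); rewrite /= !fK f_adj.
  by exists (f' a0), (f' b0); rewrite -f_adj !f'K.
- by move=> x; rewrite g_lab -f_lab /= fK.
Qed.

Theorem mainTheorem5 (X : finType) (Ci Cj : xgraph X) :
  in_CX Ci -> in_CX Cj -> ~ iso Ci Cj ->
  ((exists w : xgraph X, is_Xforest w /\ covby w Ci /\ covby w Cj)
   <-> NNI Ci Cj).
Proof.
move=> CiX CjX CiNCj; split.
  move=> [w [_ [[Ci_w|Di] [Cj_w|Dj]]]].
  - move/contractionP: Ci_w => [u [v [g Cg]]]; move/contractionP: Cj_w => [u' [v' [h Ch]]].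
    exact: (cx_common_contraction_nni CiX CjX Cg Ch CiNCj).
  - by case: (cx_safe_deletion_not_contraction CjX CiX Dj Ci_w).
  - by case: (cx_safe_deletion_not_contraction CiX CjX Di Cj_w).
  - by case: CiNCj; exact: cx_safe_deletions_iso CiX CjX Di Dj.
move=> [u [v [b [c [[uv _ _ ub bv] [vc [cu nni_iso]]]]]]].
have simCi := cx_simple CiX.
have [u0 _ _] := unlift_some (adj_neq simCi uv).
have Cg := contract_graph_contraction u0 simCi uv.
exists (contract_graph Ci u v u0); split; first exact: contraction_forest CiX Cg.
split; first by left; apply/contractionP; exists u, v, (contract_map Ci u v u0).
have [u' [v' [h Ch]]] := contraction_by_iso (nni_contraction simCi uv Cg ub bv vc cu) nni_iso.
by left; apply/contractionP; exists u', v', h.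
Qed.
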